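(* Let $G$ be a graph of the form $G=B\cup G_1\cup\cdots\cup G_m$ with $m\ge 2$, where $B,G_1,\dots,G_m$ are subgraphs, the graphs $G_1,\dots,G_m$ are pairwise vertex-disjoint, and each $G_i$ shares exactly one vertex $x_i$ with $B$. Let $p$ be an integer such that $\mathrm{pw}(G_i;x_i)\le p$ for all $i\in\{2,\dots,m\}$. Then for every $x\in V(B)$, $$\mathrm{pw}(G;x)\le \max\{\mathrm{pw}(B;x_1)+p+1,\ \mathrm{pw}(G_1;x_1)\}.$$
   Context: A path-decomposition of $G$ is a sequence $(X_0,\dots,X_s)$ of subsets of $V(G)$ such that for each vertex $v$ the indices $i$ with $v\in X_i$ form a non-empty interval, and each edge has both ends in some $X_i$; its width is $\max_i|X_i|-1$. For $x\in V(G)$, $\mathrm{pw}(G;x)$ denotes the minimum width of a path-decomposition $(X_0,\dots,X_s)$ of $G$ with $x\in X_0$. *)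

From mathcomp Require Import all_boot.
From Stdlib Require Import ClassicalEpsilon.
Set Implicit Arguments. Unset Strict Implicit. Unset Printing Implicit Defensive.

Record graph (T : finType) := Graph { gV : {set T}; gE : {set {set T}} }.

Definition wf_graph (T : finType) (G : graph T) : Prop :=
  forall e, e \in gE G -> #|e| = 2 /\ e \subset gV G.

Definition path_decomposition (T : finType) (G : graph T) (X : seq {set T}) : Prop :=
  [/\ X != [::],
      (forall i, i < size X -> nth set0 X i \subset gV G),
      (forall v, v \in gV G ->
         exists a b, a <= b /\ b < size X /\
           forall i, i < size X -> (v \in nth set0 X i) = (a <= i <= b)) &
      (forall e, e \in gE G -> exists2 i, i < size X & e \subset nth set0 X i)].

Definition pd_width (T : finType) (X : seq {set T}) : nat :=
  (\max_(Y <- X) #|Y|).-1.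

Definition is_pw (T : finType) (G : graph T) (x : T) (k : nat) : Prop :=
  (exists X, [/\ path_decomposition G X, x \in nth set0 X 0 & pd_width X = k]) /\
  (forall X, path_decomposition G X -> x \in nth set0 X 0 -> k <= pd_width X).

Definition pw (T : finType) (G : graph T) (x : T) : nat :=
  epsilon (inhabits 0) (is_pw G x).

From mathcomp Require Import all_boot zify.
From Stdlib Require Import ClassicalEpsilon.
From Stdlib Require Wf_nat.
Set Implicit Arguments. Unset Strict Implicit. Unset Printing Implicit Defensive.

(* Take an optimal decomposition W of B with x_1 in its first bag, reverse
   it and add x to every bag: this is a decomposition R of B rooted at x, of
   width at most b + 1 (b = pw(B;x_1)), whose last bag contains x_1.  The
   graphs G_1, ..., G_m are then attached one at a time by SPLICING an
   optimal decomposition Z of G_i, rooted at x_i, right after a bag D_k of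
   the current decomposition containing x_i: each inserted bag is a bag of Z
   together with the separator D_k :&: D_(k+1).
   - G_1 is spliced after the last bag of R, where the separator is empty,
     so its bags have size at most pw(G_1;x_1) + 1.
   - For i >= 2, D_k is a bag of R that x_i leaves (x_i \notin D_(k+1));
     the separator then misses x_i, so it has at most b + 1 vertices and the
     new bags have at most b + p + 2.  Splicing never changes the bag that a
     vertex other than the attachment vertex leaves, so such a bag is still
     available for every graph not yet attached. *)

Lemma pw_spec (T : finType) (H : graph T) v X :
  path_decomposition H X -> v \in nth set0 X 0 -> is_pw H v (pw H v).
Proof.
move=> hX hv.
pose rooted k := exists Y, [/\ path_decomposition H Y, v \in nth set0 Y 0 & pd_width Y = k].
have [k [[rk kmin] _]] := Wf_nat.dec_inh_nat_subset_has_unique_least_element rooted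
  (fun k => classic (rooted k)) (ex_intro rooted _ (ex_intro _ X (And3 hX hv erefl))).
apply: epsilon_spec; exists k; split=> // Y hY hvY; apply/leP/kmin; by exists Y.
Qed.

Lemma pw_le_width (T : finType) (H : graph T) v X :
  path_decomposition H X -> v \in nth set0 X 0 -> pw H v <= pd_width X.
Proof. by move=> hX hv; have [_] := pw_spec hX hv; apply. Qed.

Lemma pd_single (T : finType) (H : graph T) :
  wf_graph H -> path_decomposition H [:: gV H].
Proof.
move=> hwf; split=> //; first by case.
- by move=> v hv; exists 0, 0; do !split=> //; case=> [|i] //= _; rewrite hv.
- by move=> e he; exists 0 => //; case: (hwf e he).
Qed.

Lemma pd_width_le (T : finType) (X : seq {set T}) w :
  (forall i, #|nth set0 X i| <= w.+1) -> pd_width X <= w.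
Proof.
move=> hX; suff : \max_(Y <- X) #|Y| <= w.+1 by rewrite /pd_width; lia.
by apply/bigmax_leqP_seq => Y hY _; rewrite -(nth_index set0 hY).
Qed.

Lemma pw_witness (T : finType) (H : graph T) v : wf_graph H -> v \in gV H ->
  exists X, [/\ path_decomposition H X, v \in nth set0 X 0 &
                forall i, #|nth set0 X i| <= (pw H v).+1].
Proof.
move=> hwf hv; have [[X [hX hvX wX]] _] := pw_spec (pd_single hwf) hv.
exists X; split=> // i; case: (ltnP i (size X)) => hi; last by rewrite nth_default ?cards0.
have : #|nth set0 X i| <= \max_(Y <- X) #|Y| := leq_bigmax_seq _ (mem_nth set0 hi) isT.
by rewrite /pd_width in wX; lia.
Qed.

Lemma pd_bag_sub (T : finType) (H : graph T) X i v :
  path_decomposition H X -> v \in nth set0 X i -> v \in gV H.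
Proof.
case=> _ hsub _ _; case: (ltnP i (size X)) => hi; first exact/subsetP/hsub.
by rewrite nth_default ?inE.
Qed.

Definition occurs_on (T : finType) (X : seq {set T}) (v : T) (a b : nat) : Prop :=
  forall i, (v \in nth set0 X i) = (a <= i <= b).

Lemma pd_occurs (T : finType) (H : graph T) X v :
  path_decomposition H X -> v \in gV H ->
  exists a b, [/\ a <= b, b < size X & occurs_on X v a b].
Proof.
case=> _ _ hint _ /hint [a [b [ab [bX occ]]]]; exists a, b; split=> // i.
case: (ltnP i (size X)) => hi; first exact: occ.
by rewrite nth_default ?inE //; lia.
Qed.

Definition root_rev (T : finType) (x : T) (W : seq {set T}) : seq {set T} :=
  map (setU [set x]) (rev W).

Lemma nth_root_rev (T : finType) (x : T) W i :
  nth set0 (root_rev x W) i =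
  if i < size W then x |: nth set0 W (size W - i.+1) else set0.
Proof.
case: ifP => hi; first by rewrite (nth_map set0) ?size_rev // nth_rev.
by rewrite nth_default // size_map size_rev; lia.
Qed.

Lemma pd_root_rev (T : finType) (H : graph T) W x :
  path_decomposition H W -> x \in gV H -> path_decomposition H (root_rev x W).
Proof.
move=> hW hx; have W0 : 0 < size W by case: hW; case: (W).
have szR : size (root_rev x W) = size W by rewrite size_map size_rev.
split; rewrite ?szR.
- by rewrite -size_eq0 szR -lt0n.
- move=> i hi; rewrite nth_root_rev hi subUset sub1set hx.
  by case: hW => _ hsub _ _; apply: hsub; lia.
- move=> v hv; suff [a [b [ab bW occ]]] :
      exists a b, [/\ a <= b, b < size W & occurs_on (root_rev x W) v a b].
    by exists a, b; do !split=> // i _; apply: occ.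
  case: (eqVneq v x) => [->|vx].
    exists 0, (size W).-1; split; [lia | lia | move=> i].
    by rewrite nth_root_rev; case: ifP => hi; rewrite ?setU11 ?inE; lia.
  have [a [b [ab bW occ]]] := pd_occurs hW hv.
  exists (size W - b.+1), (size W - a.+1); split; [lia | lia | move=> i].
  rewrite nth_root_rev; case: ifP => hi; last by rewrite inE; lia.
  by rewrite in_setU1 (negbTE vx) occ; lia.
- move=> e; case: hW => _ _ _ hedge /hedge [i hi he].
  exists (size W - i.+1); first lia.
  rewrite nth_root_rev ifT; last lia.
  have -> : size W - (size W - i.+1).+1 = i by lia.
  exact: subset_trans he (subsetUr _ _).
Qed.

Definition splice (T : finType) (D : seq {set T}) (k : nat) (Z : seq {set T}) :=
  take k.+1 D ++ map (setU (nth set0 D k :&: nth set0 D k.+1)) Z ++ drop k.+1 D.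

Section Splice.
Variables (T : finType) (D Z : seq {set T}) (k : nat).
Hypothesis hk : k < size D.

Lemma size_splice : size (splice D k Z) = size D + size Z.
Proof. by rewrite !size_cat size_takel // size_map size_drop; lia. Qed.

Lemma nth_splice i :
  nth set0 (splice D k Z) i =
  if i <= k then nth set0 D i
  else if i <= k + size Z then (nth set0 D k :&: nth set0 D k.+1) :|: nth set0 Z (i - k.+1)
  else nth set0 D (i - size Z).
Proof.
rewrite nth_cat size_takel //; case: (leqP i k) => h1; first by rewrite ifT ?nth_take.
rewrite ifF; last lia.
rewrite nth_cat size_map; case: (leqP i (k + size Z)) => h2.
  by rewrite ifT ?(nth_map set0) //; lia.
by rewrite ifF ?nth_drop; [congr nth | ]; lia.
Qed.

Lemma splice_occurs_old v a b :
  (forall l, v \notin nth set0 Z l) -> occurs_on D v a b ->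
  occurs_on (splice D k Z) v (if a <= k then a else a + size Z)
                             (if b <= k then b else b + size Z).
Proof.
move=> vZ occ i; rewrite nth_splice; case: ifP => h1; first by rewrite occ; do 2 case: ifP; lia.
case: ifP => h2; last by rewrite occ; do 2 case: ifP; lia.
by rewrite in_setU in_setI !occ (negbTE (vZ _)) orbF; do 2 case: ifP; lia.
Qed.

Lemma splice_occurs_new v a b :
  (forall i, v \notin nth set0 D i) -> b < size Z -> occurs_on Z v a b ->
  occurs_on (splice D k Z) v (a + k.+1) (b + k.+1).
Proof.
move=> vD bZ occ i; rewrite nth_splice; case: ifP => h1; first by rewrite (negbTE (vD _)); lia.
case: ifP => h2; last by rewrite (negbTE (vD _)); lia.
by rewrite in_setU in_setI !(negbTE (vD _)) occ; lia.
Qed.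

Lemma splice_occurs_join y a b c :
  y \in nth set0 D k -> occurs_on D y a b -> c < size Z -> occurs_on Z y 0 c ->
  occurs_on (splice D k Z) y a (if b <= k then c + k.+1 else b + size Z).
Proof.
move=> yk occD cZ occZ; have := occD k; rewrite yk => /esym akb i.
rewrite nth_splice; case: ifP => h1; first by rewrite occD; case: ifP; lia.
case: ifP => h2; last by rewrite occD; case: ifP; lia.
by rewrite in_setU in_setI !occD occZ; case: ifP; lia.
Qed.

Lemma splice_bag_card w :
  (forall i, #|nth set0 D i| <= w) ->
  (forall l, #|nth set0 D k :&: nth set0 D k.+1| + #|nth set0 Z l| <= w) ->
  forall i, #|nth set0 (splice D k Z) i| <= w.
Proof.
move=> hD hZ i; rewrite nth_splice; case: ifP => _ //; case: ifP => _ //.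
apply: leq_trans (hZ (i - k.+1)).
by have := cardsUI (nth set0 D k :&: nth set0 D k.+1) (nth set0 Z (i - k.+1)); lia.
Qed.

End Splice.

Lemma splice_interval (T : finType) (H K : graph T) D Z k y v :
  path_decomposition H D -> path_decomposition K Z -> k < size D ->
  y \in nth set0 D k -> y \in nth set0 Z 0 ->
  (forall u, u \in gV H -> u \in gV K -> u = y) -> v \in gV H :|: gV K ->
  exists a b, [/\ a <= b, b < size D + size Z & occurs_on (splice D k Z) v a b].
Proof.
move=> hD hZ hk yD yZ hHK hv.
case: (eqVneq v y) => [-> | vy].
  have [a [b [ab bD occD]]] := pd_occurs hD (pd_bag_sub hD yD).
  have [a' [c [_ cZ occZ]]] := pd_occurs hZ (pd_bag_sub hZ yZ).
  have a'0 : a' = 0 by move: (occZ 0); rewrite yZ; lia.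
  have := occD k; rewrite yD; subst a' => akb.
  exists a, (if b <= k then c + k.+1 else b + size Z).
  by split; [case: ifP; lia | case: ifP; lia | exact: splice_occurs_join].
case/setUP: hv => [vH | vK].
  have [a [b [ab bD occ]]] := pd_occurs hD vH.
  exists (if a <= k then a else a + size Z), (if b <= k then b else b + size Z).
  split; [by do 2 case: ifP; lia | by case: ifP; lia | apply: splice_occurs_old => // l].
  by apply: contra vy => /(pd_bag_sub hZ) vK; apply/eqP/hHK.
have [a [b [ab bZ occ]]] := pd_occurs hZ vK.
exists (a + k.+1), (b + k.+1); split; [lia | lia | apply: splice_occurs_new => // i].
by apply: contra vy => /(pd_bag_sub hD) vH; apply/eqP/hHK.
Qed.

Lemma pd_splice (T : finType) (G H K : graph T) D Z k y :
  path_decomposition H D -> path_decomposition K Z -> k < size D ->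
  y \in nth set0 D k -> y \in nth set0 Z 0 ->
  (forall u, u \in gV H -> u \in gV K -> u = y) ->
  gV G = gV H :|: gV K -> gE G = gE H :|: gE K ->
  path_decomposition G (splice D k Z).
Proof.
move=> hD hZ hk yD yZ hHK hV hE.
have Z0 : 0 < size Z by case: hZ; case: (Z).
split; rewrite ?(size_splice _ hk).
- by rewrite -size_eq0 (size_splice _ hk); lia.
- move=> i _; rewrite nth_splice // hV; apply/subsetP => v.
  case: ifP => _; first by move/(pd_bag_sub hD); rewrite inE => ->.
  case: ifP => _; last by move/(pd_bag_sub hD); rewrite inE => ->.
  by rewrite !inE => /orP [/andP [/(pd_bag_sub hD) -> _] | /(pd_bag_sub hZ) ->]; rewrite ?orbT.
- move=> v; rewrite hV => /(splice_interval hD hZ hk yD yZ hHK) [a [b [ab bS occ]]].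
  by exists a, b; do !split=> // i _; apply: occ.
- case: hD hZ => _ _ _ edgeD [_ _ _ edgeZ] e; rewrite hE => /setUP [/edgeD | /edgeZ].
    case=> i iD ei; case: (leqP i k) => ik.
      by exists i; [lia | rewrite nth_splice // ik].
    exists (i + size Z); first lia.
    by rewrite nth_splice // !ifF ?addnK //; lia.
  case=> l lZ el; exists (k.+1 + l); first lia.
  rewrite nth_splice // ifF; last lia.
  by rewrite ifT ?addKn; [exact: subset_trans el (subsetUr _ _) | lia].
Qed.

Definition small_exit (T : finType) (X : seq {set T}) (w : nat) (u : T) : Prop :=
  exists k, [/\ u \in nth set0 X k, u \notin nth set0 X k.+1 & #|nth set0 X k| <= w].

(* When all bags have at most w vertices, every vertex leaves at its last bag. *)
Lemma pd_small_exit (T : finType) (H : graph T) X w u :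
  path_decomposition H X -> (forall i, #|nth set0 X i| <= w) -> u \in gV H ->
  small_exit X w u.
Proof.
move=> hX hw /(pd_occurs hX) [a [b [ab _ occ]]].
by exists b; rewrite !occ; split=> //; lia.
Qed.

(* The separator of a bag that u leaves misses u, so it is strictly smaller. *)
Lemma card_exit_separator (T : finType) (A B : {set T}) u :
  u \in A -> u \notin B -> #|A :&: B| < #|A|.
Proof. by move=> uA uB; apply/proper_card/properIl/subsetPn; exists u. Qed.

Lemma small_exit_splice (T : finType) (H K : graph T) D Z k y w u :
  path_decomposition H D -> path_decomposition K Z -> k < size D ->
  (forall v, v \in gV H -> v \in gV K -> v = y) -> u != y ->
  small_exit D w u -> small_exit (splice D k Z) w u.
Proof.
move=> hD hZ hk hHK uy [j [uj uj1 cj]].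
have Z0 : 0 < size Z by case: hZ; case: (Z).
case: (ltngtP j k) => jk.
- by exists j; rewrite !nth_splice // jk (ltnW jk).
- exists (j + size Z); rewrite !nth_splice // !ifF; try lia.
  by rewrite addnK (_ : (j + size Z).+1 - size Z = j.+1) //; lia.
- subst j; exists k; rewrite !nth_splice // leqnn ifF; last lia.
  rewrite ifT ?subnn; last lia.
  split=> //; rewrite !inE (negbTE uj1) andbF /=.
  by apply: contra uy => /(pd_bag_sub hZ) uK; apply/eqP/hHK => //; apply: pd_bag_sub hD uj.
Qed.

Section AttachPendants.
Variables (T : finType) (B : graph T) (m : nat) (Gs : nat -> graph T) (xs : nat -> T).
Variables (p : nat) (x : T).
Hypothesis m_pos : 0 < m.
Hypothesis wfB : wf_graph B.
Hypothesis wfGs : forall i, 1 <= i <= m -> wf_graph (Gs i).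
Hypothesis disjGs : forall i j, 1 <= i <= m -> 1 <= j <= m -> i != j ->
  [disjoint gV (Gs i) & gV (Gs j)].
Hypothesis meetB : forall i, 1 <= i <= m -> gV B :&: gV (Gs i) = [set xs i].
Hypothesis pwGs : forall i, 2 <= i <= m -> pw (Gs i) (xs i) <= p.
Hypothesis xB : x \in gV B.

Definition partial n : graph T :=
  Graph (gV B :|: \bigcup_(1 <= i < n) gV (Gs i)) (gE B :|: \bigcup_(1 <= i < n) gE (Gs i)).

Lemma partial_succV n : 0 < n -> gV (partial n.+1) = gV (partial n) :|: gV (Gs n).
Proof. by move=> n0; rewrite /= big_nat_recr //= setUA. Qed.

Lemma partial_succE n : 0 < n -> gE (partial n.+1) = gE (partial n) :|: gE (Gs n).
Proof. by move=> n0; rewrite /= big_nat_recr //= setUA. Qed.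

Lemma xs_meet i : 1 <= i <= m -> xs i \in gV B :&: gV (Gs i).
Proof. by move=> hi; rewrite meetB ?set11. Qed.

Lemma B_meet i v : 1 <= i <= m -> v \in gV B -> v \in gV (Gs i) -> v = xs i.
Proof. by move=> hi vB vG; apply/set1P; rewrite -(meetB hi) inE vB. Qed.

Lemma partial_meet n v : 1 <= n <= m -> v \in gV (partial n) -> v \in gV (Gs n) -> v = xs n.
Proof.
move=> hn /setUP [vB vGn | vGs vGn]; first exact: B_meet.
exfalso; move: vGs; apply/negP; rewrite big_nat_cond.
apply: (big_ind (fun S : {set T} => v \notin S)) => [|S1 S2|i /andP [hi _]]; first by rewrite inE.
  by rewrite inE => /negbTE -> /negbTE ->.
by rewrite (disjointFl (@disjGs i n _ hn _) vGn) //; lia.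
Qed.

Lemma xs_neq i j : 1 <= i <= m -> 1 <= j <= m -> i != j -> xs i != xs j.
Proof.
move=> hi hj ij; have /setIP [_ xi] := xs_meet hi; have /setIP [_ xj] := xs_meet hj.
by apply: contraTneq xj => <-; rewrite (disjointFr (disjGs hi hj ij) xi).
Qed.

Let b := pw B (xs 1).
Let c := pw (Gs 1) (xs 1).
(* Bag size of a decomposition of width max(b + p + 1, c). *)
Let w := maxn (b + p + 2) c.+1.

(* The invariant once G_1, ..., G_(n-1) are attached: a decomposition of
   partial n rooted at x, of the target width, in which each attachment
   vertex still to be used leaves a bag of at most b + 2 vertices. *)
Definition attached n D := [/\ path_decomposition (partial n) D, x \in nth set0 D 0,
  forall i, #|nth set0 D i| <= w & forall j, n <= j <= m -> small_exit D b.+2 (xs j)].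

Lemma attached_base : exists D, attached 2 D.
Proof.
have h1 : 1 <= 1 <= m by lia.
have /setIP [y1B y1G] := xs_meet h1.
have [W [hW y1W Wcard]] := pw_witness wfB y1B.
have [Z [hZ y1Z Zcard]] := pw_witness (wfGs h1) y1G.
have hR := pd_root_rev hW xB.
have szW : 0 < size W by case: hW; case: (W).
have szR : size (root_rev x W) = size W by rewrite size_map size_rev.
have Rcard i : #|nth set0 (root_rev x W) i| <= b.+2.
  rewrite nth_root_rev; case: ifP => _; last by rewrite cards0.
  by rewrite cardsU1; have := Wcard (size W - i.+1); case: (_ \notin _); lia.
pose k := (size W).-1.
have hk : k < size (root_rev x W) by rewrite szR; lia.
have y1k : xs 1 \in nth set0 (root_rev x W) k.
  rewrite nth_root_rev ifT; last lia.
  by rewrite (_ : size W - k.+1 = 0) ?setU1r //; lia.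
exists (splice (root_rev x W) k Z); split.
- apply: (pd_splice hR hZ hk y1k y1Z); first by move=> v; apply: B_meet.
    by rewrite /= big_nat1.
  by rewrite /= big_nat1.
- by rewrite nth_splice // nth_root_rev szW setU11.
- apply: splice_bag_card => // [i | l]; first by have := Rcard i; rewrite /w; lia.
  rewrite [nth _ _ k.+1]nth_default ?szR; last lia.
  by rewrite setI0 cards0; have := Zcard l; rewrite /w; lia.
- move=> j hj; have hj1 : 1 <= j <= m by lia.
  have /setIP [yjB _] := xs_meet hj1.
  apply: small_exit_splice hR hZ hk (fun v => @B_meet 1 v h1) _ (pd_small_exit hR Rcard yjB).
  by apply: xs_neq; lia.
Qed.

Lemma attached_step n D : 2 <= n <= m -> attached n D -> exists D', attached n.+1 D'.
Proof.
move=> hn [hD D0 Dcard Dexit]; have hn1 : 1 <= n <= m by lia.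
have n0 : 0 < n by lia.
have [k [yk yk1 kcard]] : small_exit D b.+2 (xs n) by apply: Dexit; lia.
have hk : k < size D by case: (ltnP k (size D)) yk => // kD; rewrite nth_default ?inE.
have /setIP [_ ynG] := xs_meet hn1.
have [Z [hZ ynZ Zcard]] := pw_witness (wfGs hn1) ynG.
have hmeet := fun v => @partial_meet n v hn1.
exists (splice D k Z); split.
- exact: pd_splice hD hZ hk yk ynZ hmeet (partial_succV n0) (partial_succE n0).
- by rewrite nth_splice.
- apply: splice_bag_card => // l.
  have := card_exit_separator yk yk1; have := Zcard l; have := pwGs hn; rewrite /w; lia.
- move=> j hj; apply: small_exit_splice hD hZ hk hmeet _ (Dexit j _); last lia.
  by apply: xs_neq; lia.
Qed.

Lemma attached_upto n : 2 <= n <= m.+1 -> exists D, attached n D.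
Proof.
elim: n => [|n IH] hn; first lia.
case: (leqP n 1) => n1; first by rewrite (_ : n.+1 = 2); [exact: attached_base | lia].
by have [D hD] := IH ltac:(lia); apply: attached_step hD; lia.
Qed.

Lemma pw_attached : pw (partial m.+1) x <= maxn (b + p + 1) c.
Proof.
have [D [hD D0 Dcard _]] := @attached_upto m.+1 ltac:(lia).
apply: leq_trans (pw_le_width hD D0) (pd_width_le _) => i.
by have := Dcard i; rewrite /w; lia.
Qed.

End AttachPendants.

Theorem lemma3p3 (T : finType) (G B : graph T) (m : nat) (Gs : nat -> graph T)
  (xs : nat -> T) (p : nat) (x : T) :
  2 <= m ->
  wf_graph B ->
  (forall i, 1 <= i <= m -> wf_graph (Gs i)) ->
  gV G = gV B :|: \bigcup_(1 <= i < m.+1) gV (Gs i) ->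
  gE G = gE B :|: \bigcup_(1 <= i < m.+1) gE (Gs i) ->
  (forall i j, 1 <= i <= m -> 1 <= j <= m -> i != j ->
     [disjoint gV (Gs i) & gV (Gs j)]) ->
  (forall i, 1 <= i <= m -> gV B :&: gV (Gs i) = [set xs i]) ->
  (forall i, 2 <= i <= m -> pw (Gs i) (xs i) <= p) ->
  x \in gV B ->
  pw G x <= maxn (pw B (xs 1) + p + 1) (pw (Gs 1) (xs 1)).
Proof.
move=> hm wfB wfGs hV hE disjGs meetB pwGs xB.
have -> : G = partial B Gs m.+1 by case: G hV hE => VG EG /= -> ->.
exact: pw_attached (ltnW hm) wfB wfGs disjGs meetB pwGs xB.
Qed.
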